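(* Let $n$ be a prime and $1\le a_1<a_2\le n/2$ integers, and let $\lambda_j=\omega^{a_1 j}+\omega^{-a_1 j}+\omega^{a_2 j}+\omega^{-a_2 j}$, $j=0,\dots,n-1$, with $\omega=e^{2\pi i/n}$, be the eigenvalues of $A(C_n(a_1,a_2))$ (with eigenvector $(1,\omega^j,\dots,\omega^{(n-1)j})$ for $\lambda_j$). (i) If $n\nmid a_1^2+a_2^2$, then $A(C_n(a_1,a_2))$ has the simple eigenvalue $\lambda_0=4$, and every other eigenvalue has multiplicity exactly two; more precisely, for $j,k\in\{1,\dots,n-1\}$, $\lambda_j=\lambda_k$ if and only if $j=k$ or $n\mid j+k$. (ii) If $n\mid a_1^2+a_2^2$, then for $j,k\in\{1,\dots,n-1\}$, $\lambda_j=\lambda_k$ if and only if $j=k$, or $n\mid j+k$, or $n\mid j^2+k^2$.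
   Context: A circulant graph $C_n(a_1,a_2)$, with integers $1\le a_1<a_2\le n/2$, has vertex set $\{0,1,\dots,n-1\}$, and $i\sim j$ if and only if $i-j\equiv\pm a_1$ or $\pm a_2\pmod n$. Its adjacency matrix $A(C_n(a_1,a_2))$ is the $n\times n$ matrix with $A_{ij}=1$ if $i\sim j$ and $0$ otherwise. *)

From mathcomp Require Import all_boot all_order all_algebra.
From mathcomp Require Import reals trigo.
From mathcomp.real_closed Require Import complex.
Import GRing.Theory Num.Theory.
Local Open Scope ring_scope.
Local Open Scope complex_scope.

Definition omega (R : realType) (n : nat) : R[i] :=
  (cos (2 * pi / n%:R))%:C + 'i * (sin (2 * pi / n%:R))%:C.

Definition circ_eig (R : realType) (n a1 a2 j : nat) : R[i] :=
  let w := omega R n in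
  w ^+ (a1 * j) + w ^- (a1 * j) + w ^+ (a2 * j) + w ^- (a2 * j).

Definition circ_adj (R : realType) (n a1 a2 : nat) : 'M[R[i]]_n :=
  \matrix_(i < n, j < n)
    (if [|| (i + a1) %% n == j, (j + a1) %% n == i,
            (i + a2) %% n == j | (j + a2) %% n == i]%N
     then 1 else 0).

Definition eig_mult (R : realType) (n a1 a2 : nat) (x : R[i]) : nat :=
  #|[set j : 'I_n | circ_eig R n a1 a2 j == x]|.

(* With z = omega and c(x) = z^x + z^-x, the eigenvalue lambda_j is
   c(a1 j) + c(a2 j), and c(x) = c(y) as soon as x^2 = y^2 (mod n).
   Conversely, since 1 + X + ... + X^(n-1) is the minimal polynomial of z over
   Q, two sums of the same number of powers of z agree only if their exponents
   agree as multisets modulo n.  Hence lambda_j = lambda_k forces each of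
   (a1 j)^2, (a2 j)^2 to be congruent to (a1 k)^2 or (a2 k)^2; as a1^2 and a2^2
   are nonzero and distinct modulo n, this leaves j = +-k, or
   a1^2 + a2^2 = j^2 + k^2 = 0 (mod n), and conversely each of these makes the
   two sums agree term by term, up to swapping the terms in the last case. *)

From mathcomp Require Import all_boot all_order all_algebra all_field.
From mathcomp Require Import reals trigo.
From mathcomp.real_closed Require Import complex.
From mathcomp Require Import ring lra zify.
Set Implicit Arguments.
Unset Strict Implicit.
Unset Printing Implicit Defensive.

Import GRing.Theory Num.Theory.
Local Open Scope ring_scope.

Lemma prime_prim_root (R : nzRingType) n (w : R) :
  prime n -> w ^+ n = 1 -> w != 1 -> n.-primitive_root w.
Proof.
move=> pn wn w_neq1; have [m pm mn] := prim_order_exists (prime_gt0 pn) wn.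
case/primeP: pn => _ /(_ m mn) /orP [/eqP m1|/eqP <-] //.
by move: w_neq1; rewrite -(prim_expr_order pm) m1 expr1 eqxx.
Qed.

Section Expi.
Variable R : realType.
Local Open Scope complex_scope.

Definition expi (t : R) : R[i] := (cos t)%:C + 'i%C * (sin t)%:C.

Lemma expiD (s t : R) : expi (s + t) = expi s * expi t.
Proof.
by apply/eqP; rewrite /expi cosD sinD eq_complex /=; apply/andP; split; apply/eqP; ring.
Qed.

Lemma expi0 : expi 0 = 1.
Proof.
by apply/eqP; rewrite /expi cos0 sin0 eq_complex /=; apply/andP; split; apply/eqP; ring.
Qed.

Lemma expiMn (t : R) k : expi (k%:R * t) = expi t ^+ k.
Proof.
elim: k => [|k IHk]; first by rewrite mul0r expi0.
by rewrite -addn1 natrD mulrDl mul1r expiD IHk -exprSr addn1.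
Qed.

Lemma omega_prim_root n : prime n -> (2 < n)%N -> n.-primitive_root (omega R n).
Proof.
move=> pn n_gt2; have n_gt0 : (0 : R) < n%:R by rewrite ltr0n prime_gt0.
have -> : omega R n = expi (2 * pi / n%:R) by [].
apply: prime_prim_root => //.
  rewrite -expiMn mulrC divfK ?lt0r_neq0 // mulr_natl.
  by apply/eqP; rewrite /expi cos2pi sin2pi eq_complex /=; apply/andP; split; apply/eqP; ring.
apply/eqP => /(congr1 (@complex.Im R)) /=; apply/eqP.
rewrite mul0r mul1r !add0r; apply/lt0r_neq0/sin_gt0_pi.
have pi_gt0 := pi_gt0 R; have : (2 : R) < n%:R by rewrite ltr_nat.
rewrite divr_gt0 ?mulr_gt0 //= ltr_pdivrMr //; nra.
Qed.

End Expi.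

Definition geom_poly (R : nzRingType) n : {poly R} := \poly_(i < n) 1.

Lemma size_geom_poly (R : nzRingType) n : size (geom_poly R n) = n.
Proof. by rewrite size_poly_eq // oner_neq0. Qed.

Lemma horner_geom_poly (R : nzRingType) n (x : R) :
  (geom_poly R n).[x] = \sum_(i < n) x ^+ i.
Proof. by rewrite horner_poly; apply: eq_bigr => i _; rewrite mul1r. Qed.

Lemma map_geom_poly (R : nzRingType) (S : nzRingType) (f : {rmorphism R -> S}) n :
  map_poly f (geom_poly R n) = geom_poly S n.
Proof.
by apply/polyP => i; rewrite coef_map !coef_poly; case: ifP => _ /=; rewrite ?rmorph1 ?rmorph0.
Qed.

Lemma prim_root_geom_sum (R : idomainType) n (w : R) :
  (1 < n)%N -> n.-primitive_root w -> \sum_(i < n) w ^+ i = 0.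
Proof.
move=> n_gt1 pw; have /eqP := subrX1 w n.
rewrite (prim_expr_order pw) subrr eq_sym mulf_eq0 subr_eq0 => /orP [/eqP w1|/eqP //].
by move: (prim_order_dvd pw 1) n_gt1; rewrite w1 expr1n eqxx dvdn1 => /eqP ->.
Qed.

Lemma prime_prim_root_geom_sum (R : idomainType) n (w : R) : prime n -> n%:R != 0 :> R ->
  \sum_(i < n) w ^+ i = 0 -> n.-primitive_root w.
Proof.
move=> pn n_neq0 sum0; apply: prime_prim_root => //.
  by apply/eqP; rewrite -subr_eq0 subrX1 sum0 mulr0.
apply: contra_neq n_neq0 => w1; move: sum0; rewrite w1.
by under eq_bigr do rewrite expr1n; rewrite sumr_const card_ord.
Qed.

Lemma geom_poly_dvdp_rat n (w : algC) (r : {poly rat}) : prime n -> n.-primitive_root w ->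
  root (map_poly ratr r) w -> geom_poly rat n %| r.
Proof.
move=> pn pw rw; have [p [min_p _] root_p] := minCpolyP w.
have size_p : size p = n.
  rewrite -(size_map_poly (ratr : {rmorphism rat -> algC})) -min_p.
  by rewrite (minCpoly_cyclotomic pw) size_cyclotomic totient_prime // prednK // prime_gt0.
have /eqp_dvdl <- : p %= geom_poly rat n.
  rewrite -dvdp_size_eqp ?size_p ?size_geom_poly // -root_p map_geom_poly.
  by rewrite /root horner_geom_poly prim_root_geom_sum ?prime_gt1.
by rewrite -root_p.
Qed.

(* gcd(q, geom_poly) has a complex root, which is again a primitive n-th root of
   unity, so geom_poly divides q; the degree bound then makes q a constant
   multiple of geom_poly, and q(1) = 0 kills the constant. *)
Lemma rat_poly_prim_root_eq0 (F : numFieldType) n (z : F) (q : {poly rat}) :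
  prime n -> n.-primitive_root z ->
  (size q <= n)%N -> root (map_poly ratr q) z -> q.[1] = 0 -> q = 0.
Proof.
move=> pn pz size_q qz q1; set S := geom_poly rat n.
have Sz : root (map_poly (ratr : {rmorphism rat -> F}) S) z.
  by rewrite /root map_geom_poly horner_geom_poly prim_root_geom_sum ?prime_gt1.
have S_neq0 : S != 0 by rewrite -size_poly_eq0 size_geom_poly -lt0n prime_gt0.
set g := gcdp q S.
have gz : root (map_poly (ratr : {rmorphism rat -> F}) g) z by rewrite gcdp_map root_gcd qz Sz.
have : size (map_poly (ratr : {rmorphism rat -> algC}) g) != 1%N.
  rewrite size_map_poly; apply/negP => /size_poly1P [c c_neq0 gE].
  by move: gz; rewrite gE map_polyC /root hornerC fmorph_eq0 (negbTE c_neq0).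
case/closed_rootP => w gw.
have Sw : root (map_poly (ratr : {rmorphism rat -> algC}) S) w.
  by apply: root_dvdp gw; rewrite dvdp_map dvdp_gcdr.
have pw : n.-primitive_root w.
  apply: prime_prim_root_geom_sum => //; first by rewrite pnatr_eq0 -lt0n prime_gt0.
  by move: Sw; rewrite map_geom_poly /root horner_geom_poly => /eqP.
have /dvdpP [h qE] : S %| q.
  by apply: dvdp_trans (dvdp_gcdl q S); apply: geom_poly_dvdp_rat gw.
have [h0 | h_neq0] := eqVneq h 0; first by rewrite qE h0 mul0r.
have /size1_polyC hE : (size h <= 1)%N.
  move: size_q; rewrite qE size_mul // size_geom_poly.
  have : size h != 0%N by rewrite size_poly_eq0.
  case: (size h) => // k _; rewrite addSn; lia.
move: q1; rewrite qE hornerM horner_geom_poly hE hornerC.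
under eq_bigr do rewrite expr1n.
rewrite sumr_const card_ord mulr_natr => /eqP.
rewrite mulrn_eq0 gtn_eqF ?prime_gt0 //= => /eqP c0.
by move: h_neq0; rewrite hE c0 polyC0 eqxx.
Qed.

Definition residue (n : nat) (x : int) : nat := `|(x %% n)%Z|%N.

Section Residue.
Variable n : nat.
Hypothesis n_gt0 : (0 < n)%N.

Lemma residueE x : (residue n x)%:Z = (x %% n)%Z.
Proof. by rewrite /residue gez0_abs // modz_ge0 // eqz_nat -lt0n. Qed.

Lemma residue_lt x : (residue n x < n)%N.
Proof. by rewrite -ltz_nat residueE ltz_pmod // ltz_nat. Qed.

Lemma eq_residue x y : (residue n x == residue n y) = (x == y %[mod n])%Z.
Proof. by rewrite -eqz_nat !residueE. Qed.

End Residue.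

Section PrimRootExpz.
Variables (F : fieldType) (n : nat) (z : F).
Hypothesis pz : n.-primitive_root z.

Lemma prim_root_exprz_residue x : z ^ x = z ^+ residue n x.
Proof.
have n_gt0 := prim_order_gt0 pz.
have z_neq0 : z != 0 by rewrite (prim_root_eq0 pz) -lt0n.
rewrite {1}(divz_eq x n) mulrC expfzDr // -exprz_exp (prim_expr_order pz : z ^ n = 1).
by rewrite exp1rz mul1r -residueE.
Qed.

Lemma eq_prim_root_exprz x y : (z ^ x == z ^ y) = (x == y %[mod n])%Z.
Proof.
have n_gt0 := prim_order_gt0 pz.
rewrite !prim_root_exprz_residue (eq_prim_root_expr pz) -eq_residue //.
by rewrite !modn_small ?residue_lt.
Qed.

End PrimRootExpz.

Lemma eq_sum_prim_root_perm (F : numFieldType) n (z : F) (s t : seq int) :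
  prime n -> n.-primitive_root z -> size s = size t ->
  \sum_(x <- s) z ^ x = \sum_(x <- t) z ^ x ->
  perm_eq (map (residue n) s) (map (residue n) t).
Proof.
move=> pn pz size_st sum_st; have n_gt0 := prime_gt0 pn.
pose q : {poly rat} := \sum_(x <- s) 'X^(residue n x) - \sum_(x <- t) 'X^(residue n x).
have q0 : q = 0.
  apply: (rat_poly_prim_root_eq0 pn pz).
  - apply/leq_sizeP => j n_le_j; rewrite coefB !coef_sum !big1_seq ?subrr // => x _;
      by rewrite coefXn gtn_eqF // (leq_trans (residue_lt n_gt0 x) n_le_j).
  - rewrite /root /q rmorphB !rmorph_sum hornerD hornerN !horner_sum /=.
    under eq_bigr do rewrite map_polyXn hornerXn -prim_root_exprz_residue //.
    under [X in _ - X]eq_bigr do rewrite map_polyXn hornerXn -prim_root_exprz_residue //.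
    by rewrite sum_st subrr.
  - rewrite /q hornerD hornerN !horner_sum.
    under eq_bigr do rewrite hornerXn expr1n.
    under [X in _ - X]eq_bigr do rewrite hornerXn expr1n.
    by rewrite !big_const_seq !count_predT !iter_addr_0 size_st subrr.
apply/allP => i _; move/(congr1 (fun p : {poly rat} => p`_i)): q0.
rewrite /q coefB !coef_sum coef0; under eq_bigr do rewrite coefXn eq_sym.
under [X in _ - X]eq_bigr do rewrite coefXn eq_sym.
rewrite -!natr_sum => /eqP; rewrite subr_eq0 eqr_nat => count_eq.
by rewrite /= !count_map -!sum1_count big_mkcond [X in _ == X]big_mkcond.
Qed.

Section PrimeDvdz.
Variable p : nat.
Hypothesis pp : prime p.

Lemma prime_dvdzM (x y : int) : (p %| x * y)%Z = (p %| x)%Z || (p %| y)%Z.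
Proof. by rewrite !dvdzE abszM Euclid_dvdM. Qed.

Lemma prime_dvdz_subr_sqr (x y : int) :
  (p %| x ^+ 2 - y ^+ 2)%Z = (p %| x - y)%Z || (p %| x + y)%Z.
Proof. by rewrite subr_sqr prime_dvdzM. Qed.

Lemma prime_dvdz_match2 (A B J K : int) :
  ~~ (p %| A)%Z -> ~~ (p %| B)%Z -> ~~ (p %| A - B)%Z ->
  (p %| A * J - A * K)%Z || (p %| A * J - B * K)%Z ->
  (p %| B * J - A * K)%Z || (p %| B * J - B * K)%Z ->
  (p %| J - K)%Z || (p %| A + B)%Z && (p %| J + K)%Z.
Proof.
move=> nA nB nAB /orP [hAA|hAB] hB.
  by move: hAA; rewrite -mulrBr prime_dvdzM (negbTE nA) => /= ->.
case/orP: hB => [hBA|hBB]; last by move: hBB; rewrite -mulrBr prime_dvdzM (negbTE nB) => /= ->.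
have : (p %| (A - B) * (J + K))%Z.
  have -> : (A - B) * (J + K) = (A * J - B * K) - (B * J - A * K) by ring.
  exact: rpredB.
rewrite prime_dvdzM (negbTE nAB) /= => hJK; rewrite hJK andbT.
have : (p %| (A + B) * (J - K))%Z.
  have -> : (A + B) * (J - K) = (A * J - B * K) + (B * J - A * K) by ring.
  exact: rpredD.
by rewrite prime_dvdzM orbC.
Qed.

Lemma prime_dvdz_sqr_match2 (a b j k : int) :
  ~~ (p %| a)%Z -> ~~ (p %| b)%Z -> ~~ (p %| a ^+ 2 - b ^+ 2)%Z ->
  (p %| (a * j) ^+ 2 - (a * k) ^+ 2)%Z || (p %| (a * j) ^+ 2 - (b * k) ^+ 2)%Z ->
  (p %| (b * j) ^+ 2 - (a * k) ^+ 2)%Z || (p %| (b * j) ^+ 2 - (b * k) ^+ 2)%Z ->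
  [|| (p %| j - k)%Z, (p %| j + k)%Z |
      (p %| a ^+ 2 + b ^+ 2)%Z && (p %| j ^+ 2 + k ^+ 2)%Z].
Proof.
move=> na nb nab; rewrite !exprMn => ha hb.
have nsq x : ~~ (p %| x)%Z -> ~~ (p %| x ^+ 2)%Z by rewrite expr2 prime_dvdzM orbb.
by rewrite orbA -prime_dvdz_subr_sqr prime_dvdz_match2 ?nsq.
Qed.

End PrimeDvdz.

Lemma gtnNdvdz (n m : nat) : (0 < m < n)%N -> ~~ (n %| m%:Z)%Z.
Proof. by case/andP=> m_gt0 m_lt_n; apply/negbT/gtnNdvd. Qed.

Lemma dvdz_sub_ltn_eq (n j k : nat) :
  (j < n)%N -> (k < n)%N -> (n %| j%:Z - k%:Z)%Z -> j = k.
Proof.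
by move=> jn kn; rewrite -eqz_mod_dvd /= !modz_nat eqz_nat !modn_small // => /eqP.
Qed.

Lemma dvdn_add_ltn_eq (n j k : nat) :
  (0 < j < n)%N -> (0 < k < n)%N -> (n %| j + k)%N -> j = (n - k)%N.
Proof. by move=> hj hk /dvdnP [[|[|c]] jkE]; lia. Qed.

Section Circulant.
Variables (R : realType) (n a1 a2 : nat).
Hypotheses (pn : prime n) (a1_gt0 : (0 < a1)%N) (a1_lt_a2 : (a1 < a2)%N)
  (a2_le_half : (2 * a2 <= n)%N).

Let z := omega R n.
Let n_gt2 : (2 < n)%N. Proof. lia. Qed.
Let pz : n.-primitive_root z := omega_prim_root R pn n_gt2.

Let a1_ndvd : ~~ (n %| a1%:Z)%Z. Proof. apply: gtnNdvdz; lia. Qed.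
Let a2_ndvd : ~~ (n %| a2%:Z)%Z. Proof. apply: gtnNdvdz; lia. Qed.

Let sqr_a_ndvd : ~~ (n %| a1%:Z ^+ 2 - a2%:Z ^+ 2)%Z.
Proof.
rewrite prime_dvdz_subr_sqr // negb_or -PoszD (@gtnNdvdz _ (a1 + a2)) ?andbT; last lia.
apply/negP => /dvdz_sub_ltn_eq a12; suff: a1 = a2 by lia.
by apply: a12; lia.
Qed.

Definition twocos (x : int) : R[i] := z ^ x + z ^ (- x).

Lemma circ_eigE j : circ_eig R n a1 a2 j = twocos (a1 * j)%N + twocos (a2 * j)%N.
Proof. by rewrite /circ_eig /twocos !exprnN !addrA. Qed.

Lemma circ_eig0 : circ_eig R n a1 a2 0 = 4.
Proof. rewrite /circ_eig !muln0 expr0 invr1; ring. Qed.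

Lemma twocos_eq x y : (n %| x ^+ 2 - y ^+ 2)%Z -> twocos x = twocos y.
Proof.
have zE u v : (n %| u - v)%Z -> z ^ u = z ^ v.
  by move=> h; apply/eqP; rewrite (eq_prim_root_exprz pz) eqz_mod_dvd.
rewrite prime_dvdz_subr_sqr // /twocos => /orP [h|h].
  by rewrite (zE x y) ?(zE (- x) (- y)) // -opprD rpredN.
by rewrite addrC (zE x (- y)) ?(zE (- x) y) ?opprK // -opprD rpredN.
Qed.

Lemma twocos_sum_eq x1 x2 y1 y2 :
  twocos x1 + twocos x2 = twocos y1 + twocos y2 ->
  {in [:: x1; x2], forall x, (n %| x ^+ 2 - y1 ^+ 2)%Z || (n %| x ^+ 2 - y2 ^+ 2)%Z}.
Proof.
move=> E x x_in.
have sum_eq : \sum_(u <- [:: x1; - x1; x2; - x2]) z ^ u =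
              \sum_(u <- [:: y1; - y1; y2; - y2]) z ^ u.
  by move: E; rewrite /twocos !big_cons big_nil !addr0 !addrA.
have /mapP [y y_in] : residue n x \in map (residue n) [:: y1; - y1; y2; - y2].
  rewrite -(perm_mem (eq_sum_prim_root_perm pn pz _ sum_eq)) //.
  by apply: map_f; move: x_in; rewrite !inE => /orP [] ->; rewrite ?orbT.
move/eqP; rewrite eq_residue ?prime_gt0 // eqz_mod_dvd => xy.
have : (n %| x ^+ 2 - y ^+ 2)%Z by rewrite prime_dvdz_subr_sqr // xy.
by move: y_in; rewrite !inE => /or4P [] /eqP ->; rewrite ?sqrrN => ->; rewrite ?orbT.
Qed.

Lemma circ_eig_eq_opp j k : (n %| j + k)%N -> circ_eig R n a1 a2 j = circ_eig R n a1 a2 k.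
Proof.
move=> jk; have E (a : nat) : twocos (a * j)%N = twocos (a * k)%N.
  apply: twocos_eq; rewrite !PoszM !exprMn -mulrBr dvdz_mull // prime_dvdz_subr_sqr //.
  by apply/orP; right; rewrite -PoszD.
by rewrite !circ_eigE !E.
Qed.

Lemma circ_eig_eq_sqr j k : (n %| a1 ^ 2 + a2 ^ 2)%N -> (n %| j ^ 2 + k ^ 2)%N ->
  circ_eig R n a1 a2 j = circ_eig R n a1 a2 k.
Proof.
move=> a12 jk; have jk' : (n %| j%:Z ^+ 2 + k%:Z ^+ 2)%Z := jk.
have E (a b : nat) : (n %| a%:Z ^+ 2 + b%:Z ^+ 2)%Z -> twocos (a * j)%N = twocos (b * k)%N.
  move=> ab; apply: twocos_eq.
  have -> : (a * j)%N%:Z ^+ 2 - (b * k)%N%:Z ^+ 2 =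
            a%:Z ^+ 2 * (j%:Z ^+ 2 + k%:Z ^+ 2) - (a%:Z ^+ 2 + b%:Z ^+ 2) * k%:Z ^+ 2.
    by rewrite !PoszM; ring.
  by apply: rpredB; [apply: dvdz_mull | apply: dvdz_mulr].
by rewrite !circ_eigE (E a1 a2) // (E a2 a1) 1?addnC // addrC.
Qed.

Lemma circ_eig_eqP j k : (0 < j < n)%N -> (0 < k < n)%N ->
  circ_eig R n a1 a2 j = circ_eig R n a1 a2 k <->
  [\/ j = k, (n %| j + k)%N | (n %| a1 ^ 2 + a2 ^ 2)%N /\ (n %| j ^ 2 + k ^ 2)%N].
Proof.
move=> /andP [_ jn] /andP [_ kn]; split; last first.
  case=> [->|/circ_eig_eq_opp|[a12 jk]] //; exact: circ_eig_eq_sqr.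
rewrite !circ_eigE !PoszM => E.
have := prime_dvdz_sqr_match2 pn a1_ndvd a2_ndvd sqr_a_ndvd
  (twocos_sum_eq E (mem_head _ _)) (twocos_sum_eq E (mem_last _ _)).
case/or3P => [/dvdz_sub_ltn_eq -> //|jk|/andP [a12 jk]]; first by constructor 1.
  by constructor 2.
by constructor 3.
Qed.

Lemma circ_eig_neq4 j : (0 < j < n)%N -> circ_eig R n a1 a2 j != 4.
Proof.
move=> hj; apply/eqP; rewrite -circ_eig0 !circ_eigE !muln0 => E.
have := twocos_sum_eq E (mem_head _ _).
by rewrite expr0n subr0 orbb PoszM expr2 !prime_dvdzM // (negbTE a1_ndvd) (negbTE (gtnNdvdz hj)).
Qed.

Lemma eig_mult4 : eig_mult R n a1 a2 4 = 1%N.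
Proof.
have n_gt0 := prime_gt0 pn.
rewrite /eig_mult (_ : [set j : 'I_n | _ == 4] = [set Ordinal n_gt0]) ?cards1 //.
apply/setP => i; rewrite !inE -val_eqE /=.
have [-> | i_gt0] := posnP i; first by rewrite circ_eig0 !eqxx.
by rewrite (negbTE (circ_eig_neq4 _)) ?i_gt0 ?ltn_ord // gtn_eqF.
Qed.

Lemma eig_mult_pair j : ~~ (n %| a1 ^ 2 + a2 ^ 2)%N -> (0 < j < n)%N ->
  eig_mult R n a1 a2 (circ_eig R n a1 a2 j) = 2%N.
Proof.
move=> a12 hj; have /andP [j_gt0 jn] := hj; have njn : (n - j < n)%N by lia.
have n_odd : odd n by case: (even_prime pn) => // n2; move: n_gt2; rewrite n2.
rewrite /eig_mult (_ : [set i : 'I_n | _ == _] = [set Ordinal jn; Ordinal njn]).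
  rewrite cards2; case: eqP => // /(congr1 val) /= jE.
  by move: n_odd; rewrite -(subnK (ltnW jn)) -jE addnn odd_double.
apply/setP => i; rewrite !inE -!val_eqE /=.
have [-> | i_gt0] := posnP i.
  rewrite circ_eig0 eq_sym (negbTE (circ_eig_neq4 hj)).
  by apply/esym/norP; split; apply/eqP; lia.
have hi : (0 < i < n)%N by rewrite i_gt0 ltn_ord.
apply/eqP/orP; first case/(circ_eig_eqP hi hj) => [->|ij|[a12' _]].
- by left.
- by right; rewrite (dvdn_add_ltn_eq hi hj ij).
- by rewrite a12' in a12.
case=> /eqP iE; apply/(circ_eig_eqP hi hj); first by constructor 1.
by constructor 2; rewrite iE subnK ?dvdnn // ltnW.
Qed.

End Circulant.

Theorem proposition3 (R : realType) (n a1 a2 : nat) :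
  prime n -> (1 <= a1)%N -> (a1 < a2)%N -> (2 * a2 <= n)%N ->
  (~~ (n %| a1 ^ 2 + a2 ^ 2)%N ->
     [/\ circ_eig R n a1 a2 0 = 4,
         eig_mult R n a1 a2 4 = 1%N,
         (forall j : nat, (0 < j < n)%N ->
            eig_mult R n a1 a2 (circ_eig R n a1 a2 j) = 2%N) &
         (forall j k : nat, (0 < j < n)%N -> (0 < k < n)%N ->
            (circ_eig R n a1 a2 j = circ_eig R n a1 a2 k <->
             j = k \/ (n %| j + k)%N))]) /\
  ((n %| a1 ^ 2 + a2 ^ 2)%N ->
     forall j k : nat, (0 < j < n)%N -> (0 < k < n)%N ->
       (circ_eig R n a1 a2 j = circ_eig R n a1 a2 k <->
        [\/ j = k, (n %| j + k)%N | (n %| j ^ 2 + k ^ 2)%N])).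
Proof.
move=> pn a1_gt0 a1_lt_a2 a2_le_half; split=> [a12 | a12 j k hj hk].
  split=> [||j hj|j k hj hk]; first exact: circ_eig0.
  - exact: eig_mult4.
  - exact: eig_mult_pair.
  rewrite circ_eig_eqP //; split=> [[->|jk|[a12' _]] | [->|jk]].
  - by left.
  - by right.
  - by rewrite a12' in a12.
  - by constructor 1.
  - by constructor 2.
rewrite circ_eig_eqP //; split=> [[->|jk|[_ jk]] | [->|jk|jk]]; by constructor.
Qed.
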